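(* Let $X$ be a completely regular space and let $\mathcal B\subset\Sigma_X$ be a base for $X$ consisting of co-zero sets. If the family $\{\mathcal P\in[\mathcal B]^{\le\omega}:\mathcal P\subset_!\mathcal B\}$ contains a club, then the family $\{\mathcal P\in[\Sigma_X]^{\le\omega}:\mathcal P\subset_!\Sigma_X\}$ contains a club too.
   Context: $\Sigma_X$ denotes the collection of all co-zero sets of $X$ (sets of the form $f^{-1}((0,1])$ for continuous $f\colon X\to[0,1]$). For a family $\mathcal P$ of open subsets of $X$ contained in a family $\mathcal Q$ of open subsets of $X$, write $\mathcal P\subset_!\mathcal Q$ if for every subfamily $\mathcal S\subset\mathcal P$ and every point $x\notin\operatorname{cl}_X\bigcup\mathcal S$ there exists $W\in\mathcal P$ with $x\in W$ and $W\cap\bigcup\mathcal S=\emptyset$. $[\mathcal Q]^{\le\omega}$ denotes the set of all countable subfamilies of $\mathcal Q$. A family $\mathcal C\subset[\mathcal Q]^{\le\omega}$ is a club if (i) for every increasing sequence $C_1\subset C_2\subset\cdots$ of members of $\mathcal C$, $\bigcup_nC_n\in\mathcal C$, and (ii) every $B\in[\mathcal Q]^{\le\omega}$ is contained in some $C\in\mathcal C$. *)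

From Stdlib Require Export Reals.
Open Scope R_scope.

Definition set (X : Type) := X -> Prop.
Definition family (X : Type) := set X -> Prop.

Definition is_topology {X : Type} (O : family X) : Prop :=
  O (fun _ => True) /\
  (forall U V, O U -> O V -> O (fun x => U x /\ V x)) /\
  (forall F : family X, (forall U, F U -> O U) -> O (fun x => exists U, F U /\ U x)).

Definition closed_in {X : Type} (O : family X) (F : set X) : Prop :=
  O (fun x => ~ F x).

Definition cl {X : Type} (O : family X) (A : set X) : set X :=
  fun x => forall U, O U -> U x -> exists y, U y /\ A y.

Definition Union {X : Type} (S : family X) : set X :=
  fun x => exists U, S U /\ U x.

Definition R_open (V : R -> Prop) : Prop :=
  forall r, V r -> exists eps, 0 < eps /\ forall s, Rabs (s - r) < eps -> V s.

Definition continuous {X : Type} (O : family X) (f : X -> R) : Prop :=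
  forall V, R_open V -> O (fun x => V (f x)).

(* completely regular in Engelking's sense: T1 + functional separation of points from closed sets *)
Definition completely_regular {X : Type} (O : family X) : Prop :=
  (forall x y : X, x <> y -> exists U, O U /\ U x /\ ~ U y) /\
  (forall (F : set X) (x : X), closed_in O F -> ~ F x ->
     exists f : X -> R, continuous O f /\ (forall z, 0 <= f z <= 1) /\
       f x = 0 /\ (forall z, F z -> f z = 1)).

Definition cozero_sets {X : Type} (O : family X) : family X :=
  fun U => exists f : X -> R, continuous O f /\ (forall z, 0 <= f z <= 1) /\
    (forall x, U x <-> 0 < f x <= 1).

Definition is_base {X : Type} (O : family X) (B : family X) : Prop :=
  (forall U, B U -> O U) /\
  (forall U x, O U -> U x -> exists V, B V /\ V x /\ forall y, V y -> U y).

Definition subfam {X : Type} (P Q : family X) : Prop := forall U, P U -> Q U.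

Definition subbang {X : Type} (O : family X) (P Q : family X) : Prop :=
  subfam P Q /\
  forall S : family X, subfam S P -> forall x, ~ cl O (Union S) x ->
    exists W, P W /\ W x /\ (forall y, W y -> ~ Union S y).

Definition countable_family {X : Type} (P : family X) : Prop :=
  exists g : nat -> set X, forall U, P U -> exists n, U = g n.

Definition countable_sub {X : Type} (Q P : family X) : Prop :=
  subfam P Q /\ countable_family P.

Definition club {X : Type} (Q : family X) (C : family X -> Prop) : Prop :=
  (forall P, C P -> countable_sub Q P) /\
  (forall Cn : nat -> family X, (forall n, C (Cn n)) ->
     (forall n, subfam (Cn n) (Cn (S n))) ->
     C (fun U => exists n, Cn n U)) /\
  (forall P, countable_sub Q P -> exists P', C P' /\ subfam P P').

(* Call a countable family Q of co-zero sets good if its basic part Q ∩ B belongs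
   to the given club and refines Q pointwise; then ⊂_! passes from Q ∩ B to Q, and
   good families are closed under increasing unions.  For cofinality, let P ⊂ B be
   a ⊂_!-family closed under the following operation: for W ∈ P and a threshold
   c = 1/(m+1), add a basic set meeting W on which f < c (whenever one exists).
   If f x > c, the members of P on which f < c do not accumulate at x, so some
   W ∈ P around x avoids all of them; by the closure, f ≥ c on W.  Hence the
   co-zero set of f is a union of members of P.  Closed members of the club are
   produced by iterating its cofinality ω times. *)
From Stdlib Require Import Lra Lia ClassicalEpsilon FunctionalExtensionality
  PropExtensionality Cantor.

Section Families.
Context {X : Type}.

Lemma family_ext (A A' : family X) : (forall V, A V <-> A' V) -> A = A'.
Proof.
  intro H. apply functional_extensionality. intro V.
  apply propositional_extensionality, H.
Qed.

Lemma countable_mono (A A' : family X) :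
  subfam A A' -> countable_family A' -> countable_family A.
Proof. intros H [g Hg]. exists g. intros U HU. apply Hg, H, HU. Qed.

Lemma countable_bigunion (Fs : nat -> family X) :
  (forall n, countable_family (Fs n)) -> countable_family (fun U => exists n, Fs n U).
Proof.
  intro H.
  pose (enum n := epsilon (inhabits (fun _ : nat => fun _ : X => True))
                    (fun g => forall U, Fs n U -> exists k, U = g k)).
  exists (fun k => let (n, j) := Cantor.of_nat k in enum n j).
  intros U [n HU].
  destruct (epsilon_spec _ _ (H n) : forall U, Fs n U -> exists k, U = enum n k)
    with U as [j Hj]; [exact HU|].
  exists (Cantor.to_nat (n, j)). rewrite Cantor.cancel_of_to. exact Hj.
Qed.

Lemma countable_union (A A' : family X) :
  countable_family A -> countable_family A' -> countable_family (fun U => A U \/ A' U).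
Proof.
  intros HA HA'.
  apply (countable_mono _ (fun U => exists n,
           (fun n => match n with 0%nat => A | S _ => A' end) n U)).
  - intros U [HU | HU]; [exists 0%nat | exists 1%nat]; exact HU.
  - apply countable_bigunion. intros [|n]; assumption.
Qed.

Lemma countable_range2 (h : nat -> nat -> set X) :
  countable_family (fun V => exists i m, V = h i m).
Proof.
  exists (fun k => let (i, m) := Cantor.of_nat k in h i m).
  intros V [i [m ->]]. exists (Cantor.to_nat (i, m)).
  rewrite Cantor.cancel_of_to. reflexivity.
Qed.

Definition famI (P Q : family X) : family X := fun V => P V /\ Q V.

Definition refines (P Q : family X) : Prop :=
  forall U, Q U -> forall x, U x -> exists V, P V /\ V x /\ forall y, V y -> U y.

(* [subbang O P Q] is by definition [subfam P Q /\ separating O P]. *)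
Definition separating (O : family X) (P : family X) : Prop :=
  forall S : family X, subfam S P -> forall x, ~ cl O (Union S) x ->
    exists W, P W /\ W x /\ (forall y, W y -> ~ Union S y).

Lemma separating_refines (O P Q : family X) :
  subfam P Q -> refines P Q -> separating O P -> separating O Q.
Proof.
  intros PQ Href Psep S SQ x Hx.
  pose (S' := fun V => P V /\ exists U, S U /\ forall y, V y -> U y).
  destruct (Psep S' (fun V HV => proj1 HV) x) as [W [PW [Wx Wsep]]].
  - intros Hcl. apply Hx. intros U HU Ux.
    destruct (Hcl U HU Ux) as [y [Uy [V [[_ [U' [SU' VU']]] Vy]]]].
    exists y. split; [exact Uy|]. exists U'. auto.
  - exists W. split; [apply PQ, PW|]. split; [exact Wx|].
    intros y Wy [U [SU Uy]].
    destruct (Href U (SQ U SU) y Uy) as [V [PV [Vy VU]]].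
    apply (Wsep y Wy). exists V. split; [|exact Vy]. split; [exact PV|]. exists U. auto.
Qed.

End Families.

Lemma club_closure {X : Type} (B : family X) (C : family X -> Prop)
    (F : set X -> family X) :
  club B C -> (forall W, countable_sub B (F W)) ->
  forall seed, countable_sub B seed ->
  exists P, C P /\ subfam seed P /\ forall W, P W -> subfam (F W) P.
Proof.
  intros [HCsub [HCunion HCcof]] HF seed Hseed.
  pose (ext P := fun V => P V \/ exists W, P W /\ F W V).
  assert (Hext : forall P, countable_sub B P -> countable_sub B (ext P)).
  { intros P [PB [h Hh]]. split.
    - intros V [HV | [W [_ HV]]]; [exact (PB V HV) | exact (proj1 (HF W) V HV)].
    - apply countable_union; [exists h; exact Hh|].
      apply (countable_mono _ (fun V => exists k, F (h k) V)).
      + intros V [W [PW HV]]. destruct (Hh W PW) as [k ->]. exists k. exact HV.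
      + apply countable_bigunion. intro k. apply (HF (h k)). }
  pose (enlarge P := epsilon (inhabits (fun _ : set X => True))
                       (fun P' => C P' /\ subfam P P')).
  assert (Henlarge : forall P, countable_sub B P -> C (enlarge P) /\ subfam P (enlarge P)).
  { intros P HP. apply epsilon_spec, HCcof, HP. }
  pose (chain := nat_rect (fun _ => family X) (enlarge seed) (fun _ P => enlarge (ext P))).
  assert (Hchain : forall n, C (chain n)).
  { induction n as [|n IH]; [apply Henlarge, Hseed | apply Henlarge, Hext, HCsub, IH]. }
  assert (Hstep : forall n, subfam (ext (chain n)) (chain (S n))).
  { intro n. apply (Henlarge (ext (chain n))), Hext, HCsub, Hchain. }
  exists (fun V => exists n, chain n V). split; [|split].
  - apply HCunion; [exact Hchain | intros n V HV; apply Hstep; left; exact HV].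
  - intros V HV. exists 0%nat. apply (Henlarge seed Hseed), HV.
  - intros W [n HW] V HV. exists (S n). apply Hstep. right. exists W. auto.
Qed.

Lemma R_open_gt (c : R) : R_open (fun r => c < r).
Proof.
  intros r Hr. exists (r - c). split; [lra|].
  intros s Hs. apply Rabs_def2 in Hs. lra.
Qed.

Lemma R_open_lt (c : R) : R_open (fun r => r < c).
Proof.
  intros r Hr. exists (c - r). split; [lra|].
  intros s Hs. apply Rabs_def2 in Hs. lra.
Qed.

Section Superlevel.
Context {X : Type} (O B : family X).
Hypotheses (Htop : is_topology O) (Hbase : is_base O B).

Definition sublevel_meet (f : X -> R) (c : R) (W V : set X) : Prop :=
  B V /\ (forall z, V z -> f z < c) /\ exists z, V z /\ W z.

Lemma separating_superlevel (P : family X) (f : X -> R) (c : R) :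
  subfam P B -> separating O P -> continuous O f ->
  (forall W, P W -> (exists V, sublevel_meet f c W V) ->
     exists V, P V /\ sublevel_meet f c W V) ->
  forall x, c < f x -> exists W, P W /\ W x /\ forall y, W y -> c <= f y.
Proof.
  intros PB Psep Hf Hclosed x Hx.
  pose (S := fun V => P V /\ forall z, V z -> f z < c).
  destruct (Psep S (fun V HV => proj1 HV) x) as [W [PW [Wx Wsep]]].
  - intro Hcl.
    destruct (Hcl _ (Hf _ (R_open_gt c)) Hx) as [y [Hy [V [[_ HV] Vy]]]].
    specialize (HV y Vy). lra.
  - exists W. split; [exact PW|]. split; [exact Wx|].
    intros y Wy. apply Rnot_lt_le. intro Hy.
    destruct Htop as [_ [Hint _]]. destruct Hbase as [BO Hb].
    destruct (Hb (fun z => W z /\ f z < c) y) as [V [BV [Vy VW]]];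
      [apply Hint; [apply BO, PB, PW | apply (Hf _ (R_open_lt c))] | split; assumption |].
    destruct (Hclosed W PW) as [V' [PV' [_ [HV' [z [V'z Wz]]]]]].
    { exists V. split; [exact BV|]. split; [intros z Vz; apply (VW z Vz)|].
      exists y. split; assumption. }
    apply (Wsep z Wz). exists V'. split; [split; assumption | exact V'z].
Qed.

Lemma cozero_superlevel (P : family X) (f : X -> R) :
  subfam P B -> separating O P -> continuous O f ->
  (forall m W, P W -> (exists V, sublevel_meet f (/ INR (S m)) W V) ->
     exists V, P V /\ sublevel_meet f (/ INR (S m)) W V) ->
  forall x, 0 < f x -> exists W, P W /\ W x /\ forall y, W y -> 0 < f y.
Proof.
  intros PB Psep Hf Hclosed x Hx.
  destruct (archimed_cor1 _ Hx) as [[|m] [Hm Hm0]]; [lia|].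
  destruct (separating_superlevel P f _ PB Psep Hf (Hclosed m) x Hm) as [W [PW [Wx HW]]].
  exists W. split; [exact PW|]. split; [exact Wx|].
  intros y Wy. specialize (HW y Wy).
  assert (0 < / INR (S m)) by (apply Rinv_0_lt_compat, lt_0_INR; lia).
  lra.
Qed.

End Superlevel.

Section LiftedClub.
Context {X : Type} (O B : family X) (C : family X -> Prop).
Hypotheses (Htop : is_topology O) (Hbase : is_base O B)
  (HBS : subfam B (cozero_sets O)) (HC : club B C)
  (HCbang : forall P, C P -> subbang O P B).

Definition lifted_club : family X -> Prop := fun Q =>
  countable_sub (cozero_sets O) Q /\ C (famI Q B) /\ refines (famI Q B) Q.

Lemma lifted_club_subbang (Q : family X) :
  lifted_club Q -> subbang O Q (cozero_sets O).
Proof.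
  intros [[QS _] [HQ Href]]. split; [exact QS|]. change (separating O Q).
  apply (separating_refines O (famI Q B)); [intros V HV; apply HV | exact Href |].
  exact (proj2 (HCbang _ HQ)).
Qed.

Lemma lifted_club_increasing_union (Qn : nat -> family X) :
  (forall n, lifted_club (Qn n)) -> (forall n, subfam (Qn n) (Qn (S n))) ->
  lifted_club (fun U => exists n, Qn n U).
Proof.
  intros HQ Hinc. split; [split|split].
  - intros U [n HU]. apply (HQ n), HU.
  - apply countable_bigunion. intro n. apply (HQ n).
  - replace (famI (fun U => exists n, Qn n U) B) with (fun V => exists n, famI (Qn n) B V)
      by (apply family_ext; firstorder).
    apply (proj1 (proj2 HC)); [intro n; apply (HQ n) |].
    intros n V [HV BV]. split; [apply Hinc, HV | exact BV].
  - intros U [n HU] x Ux.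
    destruct (proj2 (proj2 (HQ n)) U HU x Ux) as [V [[QV BV] [Vx VU]]].
    exists V. split; [split; [exists n|]|]; auto.
Qed.

Lemma lifted_club_cofinal (R0 : family X) :
  countable_sub (cozero_sets O) R0 -> exists Q, lifted_club Q /\ subfam R0 Q.
Proof.
  intros [RS [g Hg]].
  pose (cozero_fun i := epsilon (inhabits (fun _ : X => 0)) (fun f =>
          continuous O f /\ (forall z, 0 <= f z <= 1) /\ forall x, g i x <-> 0 < f x <= 1)).
  assert (Hcf : forall i, R0 (g i) -> continuous O (cozero_fun i) /\
            (forall z, 0 <= cozero_fun i z <= 1) /\
            forall x, g i x <-> 0 < cozero_fun i x <= 1).
  { intros i Hi. apply epsilon_spec, RS, Hi. }
  pose (wit i m W := epsilon (inhabits (fun _ : X => True))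
                       (sublevel_meet B (cozero_fun i) (/ INR (S m)) W)).
  pose (F W := fun V => exists i m,
                 sublevel_meet B (cozero_fun i) (/ INR (S m)) W V /\ V = wit i m W).
  assert (HF : forall W, countable_sub B (F W)).
  { intro W. split; [intros V [i [m [HV _]]]; apply HV|].
    apply (countable_mono _ (fun V => exists i m, V = wit i m W)); [|apply countable_range2].
    intros V [i [m [_ HV]]]. exists i, m. exact HV. }
  destruct (club_closure B C F HC HF (famI R0 B)) as [P [HP [HRP HPF]]].
  { split; [intros V HV; apply HV|].
    apply (countable_mono _ R0); [intros V HV; apply HV | exists g; exact Hg]. }
  assert (HPB : subfam P B) by apply (proj1 HC P HP).
  assert (HPR : forall U, R0 U -> forall x, U x -> exists V, P V /\ V x /\ forall y, V y -> U y).
  { intros U HU x Ux. destruct (Hg U HU) as [i ->].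
    destruct (Hcf i HU) as [Hcont [H01 Hiff]].
    destruct (cozero_superlevel O B Htop Hbase P (cozero_fun i) HPB
                (proj2 (HCbang P HP)) Hcont) with x as [W [PW [Wx HW]]].
    - intros m W PW Hex.
      assert (Hs := epsilon_spec _ _ Hex : sublevel_meet B _ _ W (wit i m W)).
      exists (wit i m W). split; [|exact Hs].
      apply (HPF W PW). exists i, m. auto.
    - apply Hiff, Ux.
    - exists W. split; [exact PW|]. split; [exact Wx|].
      intros y Wy. apply Hiff. split; [apply HW, Wy | apply H01]. }
  exists (fun U => R0 U \/ P U). split; [|intros U HU; left; exact HU].
  assert (HQB : famI (fun U => R0 U \/ P U) B = P).
  { apply family_ext. intro V. split.
    - intros [[HV | HV] BV]; [apply HRP; split|]; assumption.
    - intro HV. split; [right | apply HPB]; exact HV. }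
  unfold lifted_club. rewrite HQB. split; [split|split].
  - intros U [HU | HU]; [apply RS | apply HBS, HPB]; exact HU.
  - apply countable_union; [exists g; exact Hg | apply (proj1 HC P HP)].
  - exact HP.
  - intros U [HU | HU] x Ux; [apply HPR; assumption | exists U; auto].
Qed.

Lemma club_lifted_club : club (cozero_sets O) lifted_club.
Proof.
  split; [intros Q HQ; apply HQ|].
  split; [exact lifted_club_increasing_union | exact lifted_club_cofinal].
Qed.

End LiftedClub.

Theorem corollary2p8 (X : Type) (O : family X) (B : family X) :
  is_topology O -> completely_regular O ->
  is_base O B -> subfam B (cozero_sets O) ->
  (exists C, club B C /\
     forall P, C P -> countable_sub B P /\ subbang O P B) ->
  exists C, club (cozero_sets O) C /\
     forall P, C P -> countable_sub (cozero_sets O) P /\ subbang O P (cozero_sets O).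
Proof.
  intros Htop _ Hbase HBS [C [HC HCP]].
  assert (HCbang : forall P, C P -> subbang O P B) by (intros P HP; apply HCP, HP).
  exists (lifted_club O B C). split.
  - exact (club_lifted_club O B C Htop Hbase HBS HC HCbang).
  - intros Q HQ. split; [apply HQ | exact (lifted_club_subbang O B C HCbang Q HQ)].
Qed.
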